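(* Fix $\epsilon>0$ and let $N>0$ be such that: whenever $K_{\alpha\beta}(x,y)>\epsilon$ for some $\alpha,\beta\in S(1)$ and some $(x,y)\in Q_{\mathbf x}\times Q_{\mathbf y}$, then $K_{\alpha\beta}(a,b)>\epsilon/2$ for all $(a,b)\in Q_{\mathbf x}\times Q_{\mathbf y}$. Let $\lambda\mapsto r_\lambda$ satisfy $r_\lambda\to\infty$. Then, as $\lambda\to\infty$, the number of singular pairs $(Q,Q')\in\mathcal Q_\lambda\times\mathcal Q_\lambda$ is $o(r_\lambda^2\log r_\lambda)$.
   Context: $K(x,y)=2\pi J_0(\|x-y\|)$ on $\mathbb R^2\times\mathbb R^2$ ($J_0$ the Bessel function of the first kind of order 0); $K_{\alpha\beta}=\partial_x^\alpha\partial_y^\beta K$; $S(1)$ is the set of multi-indices in $\mathbb N^2$ of order $\le1$. For $\mathbf z\in\mathbb Z^2$, $Q_{\mathbf z}=\mathbf z/N+[0,1/N)^2$, and $\mathcal Q_\lambda$ is the set of those $Q_{\mathbf z}$ intersecting the ball of radius $r_\lambda$ centred at the origin. Two squares $Q_{\mathbf x},Q_{\mathbf y}$ are singular if there exist $(x,y)\in Q_{\mathbf x}\times Q_{\mathbf y}$ and $\alpha,\beta\in S(1)$ with $K_{\alpha\beta}(x,y)>\epsilon$. *)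

From Stdlib Require Import Reals ZArith Ensembles Finite_sets.
From Coquelicot Require Import Coquelicot.
Open Scope R_scope.

Definition pt := (R * R)%type.
Definition norm2 (p : pt) : R := sqrt (fst p ^ 2 + snd p ^ 2).

Definition J0 (t : R) : R :=
  Series (fun k => (-1) ^ k / (INR (fact k)) ^ 2 * (t / 2) ^ (2 * k)).

Definition K (x y : pt) : R :=
  2 * PI * J0 (norm2 (fst x - fst y, snd x - snd y)).

Definition mi := (nat * nat)%type.
Definition S1 (a : mi) : Prop := (fst a + snd a <= 1)%nat.

Definition dx (a : mi) (F : pt -> pt -> R) : pt -> pt -> R :=
  fun x y => Derive_n (fun t => Derive_n (fun s => F (t, s) y) (snd a) (snd x))
                      (fst a) (fst x).
Definition dy (b : mi) (F : pt -> pt -> R) : pt -> pt -> R :=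
  fun x y => Derive_n (fun t => Derive_n (fun s => F x (t, s)) (snd b) (snd y))
                      (fst b) (fst y).

Definition Kab (a b : mi) : pt -> pt -> R := dx a (dy b K).

Definition inQ (N : R) (z : Z * Z) (p : pt) : Prop :=
  IZR (fst z) / N <= fst p < IZR (fst z) / N + 1 / N /\
  IZR (snd z) / N <= snd p < IZR (snd z) / N + 1 / N.

(* Q_z belongs to the family Q_lambda: it meets the ball of radius r at 0 *)
Definition in_family (N r : R) (z : Z * Z) : Prop :=
  exists p, inQ N z p /\ norm2 p < r.

Definition singular (eps N : R) (z z' : Z * Z) : Prop :=
  exists x y a b, inQ N z x /\ inQ N z' y /\ S1 a /\ S1 b /\ Kab a b x y > eps.

(* Set of singular pairs (Q,Q') in Q_lambda x Q_lambda, indexed by (z,z') *)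
Definition singular_pairs (eps N r : R) : Ensemble ((Z * Z) * (Z * Z)) :=
  fun w => in_family N r (fst w) /\ in_family N r (snd w) /\
           singular eps N (fst w) (snd w).

From Stdlib Require Import Reals ZArith Ensembles Finite_sets Finite_sets_facts Lra Lia List.
From Coquelicot Require Import Coquelicot.
Open Scope R_scope.

(* Write J0 t = Bes0 (t^2/4) with Bes0 w = sum_k (-1)^k w^k / (k!)^2. Then u = J0 solves
   Bessel's equation t u'' + u' + t u = 0, along which
   E(t) = t (u^2 + u'^2) + u u' + u^2 / (2t) is nonincreasing, so u^2 + u'^2 = O(1/t).
   Each K_{ab} with a, b in S(1) is a combination of Bes0, Bes0', Bes0'' at |x - y|^2/4
   controlled by this quantity (Bes0'' through the equation), hence K_{ab}(x, y) <= eps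
   once |x - y| >= T. The index offset of a singular pair is then at most N T + 1, and
   the index of a square of Q_lambda at most N r_lambda + 1, so there are O(r_lambda^2)
   singular pairs. *)

Definition bessel_coef (k : nat) : R := (-1) ^ k / INR (fact k) ^ 2.

Definition Bes0 : R -> R := PSeries bessel_coef.
Definition Bes1 : R -> R := PSeries (PS_derive bessel_coef).
Definition Bes2 : R -> R := PSeries (PS_derive (PS_derive bessel_coef)).

Lemma bessel_coef_neq0 k : bessel_coef k <> 0.
Proof.
  pose proof (INR_fact_lt_0 k).
  apply Rmult_integral_contrapositive; split.
  - apply pow_nonzero; lra.
  - apply Rinv_neq_0_compat, pow_nonzero; lra.
Qed.

Lemma bessel_coef_S k : bessel_coef (S k) = - bessel_coef k / INR (S k) ^ 2.
Proof.
  unfold bessel_coef. rewrite fact_simpl, mult_INR.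
  pose proof (INR_fact_lt_0 k). pose proof (lt_0_INR (S k) (Nat.lt_0_succ k)).
  change ((-1) ^ S k) with (-1 * (-1) ^ k). field. lra.
Qed.

Lemma CV_radius_bessel_coef : CV_radius bessel_coef = p_infty.
Proof.
  apply CV_radius_infinite_DAlembert; [exact bessel_coef_neq0|].
  apply is_lim_seq_ext with (fun n => / INR (S n) ^ 2).
  - intros n. rewrite bessel_coef_S.
    pose proof (lt_0_INR (S n) (Nat.lt_0_succ n)). pose proof (bessel_coef_neq0 n).
    replace (- bessel_coef n / INR (S n) ^ 2 / bessel_coef n) with (- / INR (S n) ^ 2)
      by (field; lra).
    rewrite Rabs_Ropp, Rabs_pos_eq; [reflexivity|].
    apply Rlt_le, Rinv_0_lt_compat; nra.
  - apply is_lim_seq_le_le with (fun _ => 0) (fun n => / INR (S n)).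
    + intros n. assert (1 <= INR (S n)) by (rewrite S_INR; pose proof (pos_INR n); lra).
      split; [apply Rlt_le, Rinv_0_lt_compat; nra|].
      apply Rinv_le_contravar; nra.
    + apply is_lim_seq_const.
    + apply (is_lim_seq_incr_1 (fun n => / INR n)).
      replace (Finite 0) with (Rbar_inv p_infty) by reflexivity.
      apply is_lim_seq_inv; [apply is_lim_seq_INR | discriminate].
Qed.

Lemma is_derive_Bes0 x : is_derive Bes0 x (Bes1 x).
Proof. apply is_derive_PSeries. rewrite CV_radius_bessel_coef. exact I. Qed.

Lemma is_derive_Bes1 x : is_derive Bes1 x (Bes2 x).
Proof. apply is_derive_PSeries. rewrite CV_radius_derive, CV_radius_bessel_coef. exact I. Qed.

Lemma Bes_ode w : w * Bes2 w + Bes1 w + Bes0 w = 0.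
Proof.
  assert (Ex : forall c, CV_radius c = p_infty -> ex_pseries c w)
    by (intros c Hc; apply CV_radius_inside; rewrite Hc; exact I).
  pose proof CV_radius_bessel_coef as C0.
  assert (C1 : CV_radius (PS_derive bessel_coef) = p_infty)
    by now rewrite CV_radius_derive.
  assert (C2 : CV_radius (PS_derive (PS_derive bessel_coef)) = p_infty)
    by now rewrite !CV_radius_derive.
  unfold Bes0, Bes1, Bes2. rewrite <- PSeries_incr_1, <- !PSeries_plus.
  - rewrite <- (PSeries_const_0 w). apply PSeries_ext. intros [|n].
    + unfold PS_plus, PS_incr_1, PS_derive, plus, zero, bessel_coef; simpl. field.
    + unfold PS_plus, PS_incr_1, PS_derive, plus; cbn -[INR bessel_coef].
      rewrite (bessel_coef_S (S n)), !S_INR.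
      pose proof (pos_INR n). field. lra.
  - apply ex_pseries_plus; [apply ex_pseries_incr_1|]; auto.
  - auto.
  - apply ex_pseries_incr_1; auto.
  - auto.
Qed.

Section BesselEnergy.

Variables f0 f1 f2 : R -> R.
Hypothesis is_derive_f0 : forall w, is_derive f0 w (f1 w).
Hypothesis is_derive_f1 : forall w, is_derive f1 w (f2 w).
Hypothesis bessel_ode : forall w, w * f2 w + f1 w + f0 w = 0.

(* [a] and [b] are [u t] and [u' t] for [u t := f0 (t^2/4)], a solution of
   [t u'' + u' + t u = 0]. *)
Definition energy (t : R) : R :=
  let a := f0 (t ^ 2 / 4) in
  let b := f1 (t ^ 2 / 4) * (t / 2) in
  t * a ^ 2 + t * b ^ 2 + a * b + a ^ 2 / (2 * t).

Lemma is_derive_energy t : 0 < t ->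
  is_derive energy t (- f0 (t ^ 2 / 4) ^ 2 / (2 * t ^ 2)).
Proof.
  intros Ht. unfold energy. auto_derive.
  - assert (forall x, ex_derive (fun x => f0 x) x) by (intro x; exists (f1 x); apply is_derive_f0).
    assert (forall x, ex_derive (fun x => f1 x) x) by (intro x; exists (f2 x); apply is_derive_f1).
    repeat split; auto; lra.
  - replace (t ^ 2 / 4) with (t * (t * 1) * / 4) by field.
    set (w := t * (t * 1) * / 4).
    change (Derive (fun x => f0 x)) with (Derive f0).
    change (Derive (fun x => f1 x)) with (Derive f1).
    rewrite (is_derive_unique _ _ _ (is_derive_f0 w)), (is_derive_unique _ _ _ (is_derive_f1 w)).
    assert (Hw : 0 < w) by (unfold w; nra).
    assert (Hf2 : f2 w = - (f1 w + f0 w) / w).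
    { apply (Rmult_eq_reg_l w); [|lra].
      replace (w * (- (f1 w + f0 w) / w)) with (- (f1 w + f0 w)) by (field; lra).
      pose proof (bessel_ode w). lra. }
    rewrite Hf2. unfold w. field. lra.
Qed.

Lemma energy_le t : 1 <= t -> energy t <= energy 1.
Proof.
  intros Ht. destruct (Req_dec t 1) as [->|Hne]; [lra|].
  destruct (MVT_gen energy 1 t (fun t => - f0 (t ^ 2 / 4) ^ 2 / (2 * t ^ 2)))
    as [c [Hc Hdiff]].
  - intros x Hx. rewrite Rmin_left in Hx by lra. apply is_derive_energy. lra.
  - intros x Hx. rewrite Rmin_left in Hx by lra.
    apply derivable_continuous_pt. eexists. apply is_derive_Reals, is_derive_energy. lra.
  - rewrite Rmin_left, Rmax_right in Hc by lra.
    assert (0 <= f0 (c ^ 2 / 4) ^ 2 / (2 * c ^ 2)).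
    { apply Rmult_le_pos; [apply pow2_ge_0|]. apply Rlt_le, Rinv_0_lt_compat. nra. }
    unfold Rdiv in Hdiff at 1. rewrite Ropp_mult_distr_l_reverse in Hdiff. nra.
Qed.

Lemma energy_decay t : 1 <= t ->
  t * (f0 (t ^ 2 / 4) ^ 2 + (f1 (t ^ 2 / 4) * (t / 2)) ^ 2) <= 2 * energy 1.
Proof.
  intros Ht. pose proof (energy_le t Ht) as Hle. unfold energy at 1 in Hle.
  set (a := f0 (t ^ 2 / 4)) in *. set (b := f1 (t ^ 2 / 4) * (t / 2)) in *.
  assert (0 <= a ^ 2 / (2 * t)).
  { apply Rmult_le_pos; [apply pow2_ge_0|]. apply Rlt_le, Rinv_0_lt_compat. nra. }
  assert (- (a ^ 2 + b ^ 2) <= 2 * (a * b)) by (pose proof (pow2_ge_0 (a + b)); nra).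
  assert (0 <= a ^ 2 + b ^ 2) by (pose proof (pow2_ge_0 a); pose proof (pow2_ge_0 b); lra).
  clearbody a b. nra.
Qed.

Lemma bessel_vanishing s : 0 < s -> exists T, 2 <= T /\ forall t, T <= t ->
  f0 (t ^ 2 / 4) ^ 2 + t ^ 2 / 4 * f1 (t ^ 2 / 4) ^ 2 <= s ^ 2.
Proof.
  intros Hs. set (E := Rabs (energy 1)).
  assert (HE : 0 <= 2 * E / s ^ 2).
  { apply Rmult_le_pos; [unfold E; pose proof (Rabs_pos (energy 1)); lra|].
    apply Rlt_le, Rinv_0_lt_compat. nra. }
  exists (2 + 2 * E / s ^ 2). split; [lra|]. intros t Ht.
  assert (Hts : 2 * energy 1 <= t * s ^ 2).
  { assert (energy 1 <= E) by apply Rle_abs.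
    assert (2 * E = 2 * E / s ^ 2 * s ^ 2) by (field; lra).
    assert (0 <= (t - 2 * E / s ^ 2) * s ^ 2) by (apply Rmult_le_pos; nra).
    nra. }
  pose proof (energy_decay t ltac:(lra)) as Hdec.
  replace ((f1 (t ^ 2 / 4) * (t / 2)) ^ 2) with (t ^ 2 / 4 * f1 (t ^ 2 / 4) ^ 2) in Hdec
    by field.
  nra.
Qed.

End BesselEnergy.

Lemma J0_Bes0 t : J0 t = Bes0 (t ^ 2 / 4).
Proof.
  unfold J0, Bes0, PSeries. apply Series_ext. intros k.
  unfold bessel_coef. rewrite pow_mult.
  replace ((t / 2) ^ 2) with (t ^ 2 / 4) by field. reflexivity.
Qed.

Definition quarter_dist2 (x1 x2 y1 y2 : R) : R := ((x1 - y1) ^ 2 + (x2 - y2) ^ 2) / 4.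

Lemma K_Bes0 x1 x2 y1 y2 : K (x1, x2) (y1, y2) = 2 * PI * Bes0 (quarter_dist2 x1 x2 y1 y2).
Proof.
  unfold K, norm2, quarter_dist2. rewrite J0_Bes0. simpl fst; simpl snd.
  rewrite pow2_sqrt; [reflexivity|].
  pose proof (pow2_ge_0 (x1 - y1)); pose proof (pow2_ge_0 (x2 - y2)); lra.
Qed.

Lemma ex_derive_Bes0 x : ex_derive (fun x => Bes0 x) x.
Proof. exists (Bes1 x); apply is_derive_Bes0. Qed.
Lemma ex_derive_Bes1 x : ex_derive (fun x => Bes1 x) x.
Proof. exists (Bes2 x); apply is_derive_Bes1. Qed.

Ltac derive_Bes :=
  apply is_derive_unique; unfold quarter_dist2; auto_derive;
  [ repeat split; first [apply ex_derive_Bes0 | apply ex_derive_Bes1 | auto]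
  | change (Derive (fun x => Bes0 x)) with (Derive Bes0);
    change (Derive (fun x => Bes1 x)) with (Derive Bes1);
    rewrite ?(fun x => is_derive_unique _ _ _ (is_derive_Bes0 x)),
            ?(fun x => is_derive_unique _ _ _ (is_derive_Bes1 x));
    cbv [pow Rminus Rdiv quarter_dist2]; field ].

Lemma dy_K_00 x1 x2 y1 y2 :
  dy (0,0)%nat K (x1, x2) (y1, y2) = 2 * PI * Bes0 (quarter_dist2 x1 x2 y1 y2).
Proof. apply K_Bes0. Qed.

Lemma dy_K_10 x1 x2 y1 y2 :
  dy (1,0)%nat K (x1, x2) (y1, y2) = - PI * (x1 - y1) * Bes1 (quarter_dist2 x1 x2 y1 y2).
Proof.
  unfold dy. simpl Derive_n.
  rewrite (Derive_ext _ (fun t => 2 * PI * Bes0 (quarter_dist2 x1 x2 t y2)) )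
    by (intros t; apply K_Bes0).
  derive_Bes.
Qed.

Lemma dy_K_01 x1 x2 y1 y2 :
  dy (0,1)%nat K (x1, x2) (y1, y2) = - PI * (x2 - y2) * Bes1 (quarter_dist2 x1 x2 y1 y2).
Proof.
  unfold dy. simpl Derive_n.
  rewrite (Derive_ext _ (fun t => 2 * PI * Bes0 (quarter_dist2 x1 x2 y1 t)) )
    by (intros t; apply K_Bes0).
  derive_Bes.
Qed.

Lemma Kab_00 b x y : Kab (0,0)%nat b x y = dy b K x y.
Proof. reflexivity. Qed.

Lemma Kab_10_00 x1 x2 y1 y2 :
  Kab (1,0)%nat (0,0)%nat (x1, x2) (y1, y2) = PI * (x1 - y1) * Bes1 (quarter_dist2 x1 x2 y1 y2).
Proof.
  unfold Kab, dx. simpl Derive_n.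
  rewrite (Derive_ext _ (fun t => 2 * PI * Bes0 (quarter_dist2 t x2 y1 y2)) )
    by (intros t; apply dy_K_00).
  derive_Bes.
Qed.

Lemma Kab_01_00 x1 x2 y1 y2 :
  Kab (0,1)%nat (0,0)%nat (x1, x2) (y1, y2) = PI * (x2 - y2) * Bes1 (quarter_dist2 x1 x2 y1 y2).
Proof.
  unfold Kab, dx. simpl Derive_n.
  rewrite (Derive_ext _ (fun t => 2 * PI * Bes0 (quarter_dist2 x1 t y1 y2)) )
    by (intros t; apply dy_K_00).
  derive_Bes.
Qed.

Lemma Kab_10_10 x1 x2 y1 y2 : let w := quarter_dist2 x1 x2 y1 y2 in
  Kab (1,0)%nat (1,0)%nat (x1, x2) (y1, y2) = - PI * Bes1 w - PI / 2 * (x1 - y1) ^ 2 * Bes2 w.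
Proof.
  unfold Kab, dx. simpl Derive_n.
  rewrite (Derive_ext _ (fun t => - PI * (t - y1) * Bes1 (quarter_dist2 t x2 y1 y2)) )
    by (intros t; apply dy_K_10).
  derive_Bes.
Qed.

Lemma Kab_01_10 x1 x2 y1 y2 : let w := quarter_dist2 x1 x2 y1 y2 in
  Kab (0,1)%nat (1,0)%nat (x1, x2) (y1, y2) = - PI / 2 * (x1 - y1) * (x2 - y2) * Bes2 w.
Proof.
  unfold Kab, dx. simpl Derive_n.
  rewrite (Derive_ext _ (fun t => - PI * (x1 - y1) * Bes1 (quarter_dist2 x1 t y1 y2)) )
    by (intros t; apply dy_K_10).
  derive_Bes.
Qed.

Lemma Kab_10_01 x1 x2 y1 y2 : let w := quarter_dist2 x1 x2 y1 y2 in
  Kab (1,0)%nat (0,1)%nat (x1, x2) (y1, y2) = - PI / 2 * (x1 - y1) * (x2 - y2) * Bes2 w.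
Proof.
  unfold Kab, dx. simpl Derive_n.
  rewrite (Derive_ext _ (fun t => - PI * (x2 - y2) * Bes1 (quarter_dist2 t x2 y1 y2)) )
    by (intros t; apply dy_K_01).
  derive_Bes.
Qed.

Lemma Kab_01_01 x1 x2 y1 y2 : let w := quarter_dist2 x1 x2 y1 y2 in
  Kab (0,1)%nat (0,1)%nat (x1, x2) (y1, y2) = - PI * Bes1 w - PI / 2 * (x2 - y2) ^ 2 * Bes2 w.
Proof.
  unfold Kab, dx. simpl Derive_n.
  rewrite (Derive_ext _ (fun t => - PI * (t - y2) * Bes1 (quarter_dist2 x1 t y1 y2)) )
    by (intros t; apply dy_K_01).
  derive_Bes.
Qed.

Lemma Rabs_le_of_sqr x y : 0 <= y -> x ^ 2 <= y ^ 2 -> Rabs x <= y.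
Proof. intros Hy H. apply Rabs_le. split; nra. Qed.

(* The equation gives [|c| <= 2 s / w], and [|d1|, |d2| <= 2 sqrt w]. *)
Lemma bessel_terms_bound (s w d1 d2 a b c : R) :
  0 < s -> 1 <= w -> d1 ^ 2 + d2 ^ 2 = 4 * w ->
  a ^ 2 + w * b ^ 2 <= s ^ 2 -> w * c + b + a = 0 ->
  Rabs a <= s /\ Rabs b <= s /\ Rabs (d1 * b) <= 2 * s /\ Rabs (d2 * b) <= 2 * s /\
  Rabs (d1 ^ 2 * c) <= 8 * s /\ Rabs (d2 ^ 2 * c) <= 8 * s /\ Rabs (d1 * d2 * c) <= 4 * s.
Proof.
  intros Hs Hw Hd Hab Hc.
  pose proof (pow2_ge_0 a); pose proof (pow2_ge_0 b).
  pose proof (pow2_ge_0 d1); pose proof (pow2_ge_0 d2).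
  assert (Habs : Rabs a <= s /\ Rabs b <= s) by (split; apply Rabs_le_of_sqr; nra).
  assert (Hwc : w * Rabs c <= 2 * s).
  { rewrite <- (Rabs_pos_eq w), <- Rabs_mult by lra.
    replace (w * c) with (- (a + b)) by lra. rewrite Rabs_Ropp.
    pose proof (Rabs_triang a b). lra. }
  assert (Hd12 : Rabs d1 * Rabs d2 <= 2 * w).
  { pose proof (pow2_ge_0 (Rabs d1 - Rabs d2)).
    rewrite <- (pow2_abs d1), <- (pow2_abs d2) in Hd. nra. }
  pose proof (Rabs_pos c); pose proof (Rabs_pos d1); pose proof (Rabs_pos d2).
  repeat split; try tauto.
  - apply Rabs_le_of_sqr; nra.
  - apply Rabs_le_of_sqr; nra.
  - rewrite Rabs_mult, (Rabs_pos_eq (d1 ^ 2)) by lra. nra.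
  - rewrite Rabs_mult, (Rabs_pos_eq (d2 ^ 2)) by lra. nra.
  - rewrite !Rabs_mult. nra.
Qed.

Lemma S1_cases a : S1 a -> a = (0,0)%nat \/ a = (1,0)%nat \/ a = (0,1)%nat.
Proof. destruct a as [[|[|]] [|[|]]]; unfold S1; simpl; intros; auto; lia. Qed.

Lemma Kab_le_of_bessel_small s a b x1 x2 y1 y2 : S1 a -> S1 b -> 0 < s ->
  let w := quarter_dist2 x1 x2 y1 y2 in
  1 <= w -> Bes0 w ^ 2 + w * Bes1 w ^ 2 <= s ^ 2 ->
  Kab a b (x1, x2) (y1, y2) <= 5 * PI * s.
Proof.
  intros Ha Hb Hs w Hw Hsmall.
  assert (Hd : (x1 - y1) ^ 2 + (x2 - y2) ^ 2 = 4 * w) by (unfold w, quarter_dist2; field).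
  destruct (bessel_terms_bound s w (x1 - y1) (x2 - y2) _ _ _ Hs Hw Hd Hsmall (Bes_ode w))
    as (? & ? & ? & ? & ? & ? & ?).
  pose proof PI_RGT_0.
  destruct (S1_cases a Ha) as [-> | [-> | ->]]; destruct (S1_cases b Hb) as [-> | [-> | ->]];
    rewrite ?Kab_00, ?dy_K_00, ?dy_K_10, ?dy_K_01, ?Kab_10_00, ?Kab_01_00,
      ?Kab_10_10, ?Kab_01_10, ?Kab_10_01, ?Kab_01_01; fold w;
    repeat match goal with H : Rabs ?t <= _ |- _ =>
      pose proof (Rle_trans _ _ _ (Rle_abs t) H);
      pose proof (Rle_trans _ _ _ (Rabs_maj2 t) H); clear H end;
    nra.
Qed.

Lemma Kab_le_far eps : 0 < eps -> exists T, 0 < T /\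
  forall a b x1 x2 y1 y2, S1 a -> S1 b -> T ^ 2 <= (x1 - y1) ^ 2 + (x2 - y2) ^ 2 ->
  Kab a b (x1, x2) (y1, y2) <= eps.
Proof.
  intros Heps. pose proof PI_RGT_0.
  set (s := eps / (5 * PI)). assert (Hs : 0 < s) by (apply Rdiv_lt_0_compat; lra).
  destruct (bessel_vanishing Bes0 Bes1 Bes2 is_derive_Bes0 is_derive_Bes1 Bes_ode s Hs)
    as [T [HT Hvan]].
  exists T. split; [lra|]. intros a b x1 x2 y1 y2 Ha Hb Hfar.
  set (t := sqrt ((x1 - y1) ^ 2 + (x2 - y2) ^ 2)).
  assert (Ht2 : t ^ 2 / 4 = quarter_dist2 x1 x2 y1 y2).
  { unfold t, quarter_dist2. rewrite pow2_sqrt; [reflexivity|].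
    pose proof (pow2_ge_0 (x1 - y1)); pose proof (pow2_ge_0 (x2 - y2)); lra. }
  assert (HtT : T <= t).
  { rewrite <- (sqrt_pow2 T) by lra. apply sqrt_le_1_alt. exact Hfar. }
  specialize (Hvan t HtT). rewrite Ht2 in Hvan.
  replace eps with (5 * PI * s) by (unfold s; field; lra).
  apply Kab_le_of_bessel_small; auto.
  rewrite <- Ht2. nra.
Qed.

Lemma cardinal_In_list {X : Type} (l : list X) :
  exists n, cardinal X (fun w => In w l) n /\ (n <= length l)%nat.
Proof.
  induction l as [|a l [n [Hn Hl]]].
  - exists 0%nat. split; [|simpl; lia].
    replace (fun w : X => In w nil) with (Empty_set X); [constructor|].
    apply Extensionality_Ensembles. split; intros x Hx; inversion Hx.
  - destruct (classic (In a l)) as [Ha|Ha].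
    + exists n. split; [|simpl; lia].
      replace (fun w => In w (a :: l)) with (fun w => In w l); [exact Hn|].
      apply Extensionality_Ensembles. split; intros x Hx; unfold Ensembles.In in *; simpl in *.
      * auto.
      * destruct Hx; subst; auto.
    + exists (S n). split; [|simpl; lia].
      replace (fun w => In w (a :: l)) with (Ensembles.Add X (fun w => In w l) a).
      * apply card_add; auto.
      * apply Extensionality_Ensembles. split; intros x Hx; unfold Ensembles.In in *; simpl in *.
        -- destruct Hx as [x Hx | x Hx]; [right; exact Hx | inversion Hx; left; auto].
        -- destruct Hx as [Hx|Hx]; [subst; right; constructor | left; exact Hx].
Qed.

Lemma cardinal_le_length {X : Type} (U : Ensemble X) (l : list X) :
  Included X U (fun w => In w l) -> exists n, cardinal X U n /\ (n <= length l)%nat.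
Proof.
  intros Hincl. destruct (cardinal_In_list l) as [m [Hm Hml]].
  destruct (finite_cardinal _ _ (Finite_downward_closed _ _ (cardinal_finite _ _ _ Hm) _ Hincl))
    as [n Hn].
  exists n. split; [exact Hn|].
  pose proof (incl_card_le _ _ _ _ _ Hn Hm Hincl). lia.
Qed.

Definition Zrange (M : nat) : list Z :=
  map (fun i => (Z.of_nat i - Z.of_nat M)%Z) (seq 0 (2 * M + 1)).

Lemma In_Zrange M k : (Z.abs k <= Z.of_nat M)%Z -> In k (Zrange M).
Proof.
  intros H. apply in_map_iff. exists (Z.to_nat (k + Z.of_nat M)).
  split; [lia | apply in_seq; lia].
Qed.

Lemma length_Zrange M : length (Zrange M) = (2 * M + 1)%nat.
Proof. unfold Zrange. rewrite length_map, length_seq. reflexivity. Qed.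

Definition offset_pairs (M D : nat) : list ((Z * Z) * (Z * Z)) :=
  map (fun p => (fst p, (fst (fst p) + fst (snd p), snd (fst p) + snd (snd p))%Z))
    (list_prod (list_prod (Zrange M) (Zrange M)) (list_prod (Zrange D) (Zrange D))).

Lemma length_offset_pairs M D :
  length (offset_pairs M D) = ((2 * M + 1) * (2 * M + 1) * ((2 * D + 1) * (2 * D + 1)))%nat.
Proof. unfold offset_pairs. rewrite length_map, !length_prod, !length_Zrange. reflexivity. Qed.

Lemma In_offset_pairs M D (z z' : Z * Z) :
  (Z.abs (fst z) <= Z.of_nat M)%Z -> (Z.abs (snd z) <= Z.of_nat M)%Z ->
  (Z.abs (fst z' - fst z) <= Z.of_nat D)%Z -> (Z.abs (snd z' - snd z) <= Z.of_nat D)%Z ->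
  In (z, z') (offset_pairs M D).
Proof.
  intros H1 H2 H3 H4. apply in_map_iff.
  exists (z, (fst z' - fst z, snd z' - snd z)%Z). split.
  - destruct z, z'; simpl. do 2 f_equal; lia.
  - destruct z; simpl in *. apply in_prod; apply in_prod; apply In_Zrange; assumption.
Qed.

Lemma Zabs_le_up (k : Z) (x : R) : Rabs (IZR k) < x -> (Z.abs k <= Z.of_nat (Z.to_nat (up x)))%Z.
Proof.
  intros H. destruct (archimed x) as [H1 _].
  assert (Hk : IZR (Z.abs k) < IZR (up x)) by (rewrite abs_IZR; lra).
  apply lt_IZR in Hk. lia.
Qed.

Lemma INR_up_le (x : R) : 0 < x -> INR (Z.to_nat (up x)) <= x + 1.
Proof.
  intros H. destruct (archimed x) as [H1 H2].
  rewrite INR_IZR_INZ, Z2Nat.id; [lra|]. apply le_IZR. lra.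
Qed.

Lemma cardinal_offset_bounded (U : Ensemble ((Z * Z) * (Z * Z))) (a d : R) :
  0 < a -> 0 < d ->
  (forall z z', U (z, z') ->
     Rabs (IZR (fst z)) < a /\ Rabs (IZR (snd z)) < a /\
     Rabs (IZR (fst z' - fst z)) < d /\ Rabs (IZR (snd z' - snd z)) < d) ->
  exists n, cardinal _ U n /\ INR n <= (2 * a + 3) ^ 2 * (2 * d + 3) ^ 2.
Proof.
  intros Ha Hd HU.
  pose proof (INR_up_le a Ha). pose proof (INR_up_le d Hd).
  set (M := Z.to_nat (up a)) in *. set (D := Z.to_nat (up d)) in *.
  destruct (cardinal_le_length U (offset_pairs M D)) as [n [Hn Hle]].
  { intros [z z'] Hz. destruct (HU z z' Hz) as (H1 & H2 & H3 & H4).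
    apply In_offset_pairs; apply Zabs_le_up; assumption. }
  exists n. split; [exact Hn|].
  rewrite length_offset_pairs in Hle. apply le_INR in Hle.
  rewrite !mult_INR, !plus_INR, !mult_INR in Hle.
  replace (INR 2) with 2 in Hle by (simpl; ring). replace (INR 1) with 1 in Hle by reflexivity.
  pose proof (pos_INR M). pose proof (pos_INR D).
  assert (HM : (2 * INR M + 1) * (2 * INR M + 1) <= (2 * a + 3) ^ 2) by nra.
  assert (HD : (2 * INR D + 1) * (2 * INR D + 1) <= (2 * d + 3) ^ 2) by nra.
  eapply Rle_trans; [exact Hle|].
  apply Rmult_le_compat; nra.
Qed.

Lemma Rabs_le_norm2 p : Rabs (fst p) <= norm2 p /\ Rabs (snd p) <= norm2 p.
Proof.
  unfold norm2. pose proof (pow2_ge_0 (fst p)); pose proof (pow2_ge_0 (snd p)).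
  split; [rewrite <- (sqrt_pow2 (Rabs (fst p))) | rewrite <- (sqrt_pow2 (Rabs (snd p)))];
    try apply Rabs_pos; apply sqrt_le_1_alt; rewrite pow2_abs; lra.
Qed.

Lemma cell_index_bounds N k c : 0 < N ->
  IZR k / N <= c < IZR k / N + 1 / N -> IZR k <= N * c < IZR k + 1.
Proof.
  intros HN [H1 H2].
  apply (Rmult_le_compat_l N) in H1; [|lra]. apply (Rmult_lt_compat_l N) in H2; [|lra].
  replace (N * (IZR k / N)) with (IZR k) in H1 by (field; lra).
  replace (N * (IZR k / N + 1 / N)) with (IZR k + 1) in H2 by (field; lra).
  lra.
Qed.

Lemma in_family_bound N r z : 0 < N -> in_family N r z ->
  Rabs (IZR (fst z)) < N * r + 1 /\ Rabs (IZR (snd z)) < N * r + 1.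
Proof.
  intros HN [p [[Q1 Q2] Hp]].
  destruct (Rabs_le_norm2 p) as [P1 P2].
  apply cell_index_bounds in Q1; [|exact HN]. apply cell_index_bounds in Q2; [|exact HN].
  pose proof (Rle_abs (fst p)); pose proof (Rabs_maj2 (fst p)).
  pose proof (Rle_abs (snd p)); pose proof (Rabs_maj2 (snd p)).
  split; apply Rabs_def1; nra.
Qed.

Lemma singular_offset_bound eps N T z z' : 0 < N -> 0 < T ->
  (forall a b x1 x2 y1 y2, S1 a -> S1 b -> T ^ 2 <= (x1 - y1) ^ 2 + (x2 - y2) ^ 2 ->
     Kab a b (x1, x2) (y1, y2) <= eps) ->
  singular eps N z z' ->
  Rabs (IZR (fst z' - fst z)) < N * T + 1 /\ Rabs (IZR (snd z' - snd z)) < N * T + 1.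
Proof.
  intros HN HT Hfar [[x1 x2] [[y1 y2] [a [b [[Q1 Q2] [[R1 R2] [Ha [Hb Hk]]]]]]]].
  simpl in *.
  assert (Hnear : (x1 - y1) ^ 2 + (x2 - y2) ^ 2 < T ^ 2).
  { apply Rnot_le_lt. intros H. specialize (Hfar a b x1 x2 y1 y2 Ha Hb H). lra. }
  pose proof (pow2_ge_0 (x1 - y1)); pose proof (pow2_ge_0 (x2 - y2)).
  assert (- T < x1 - y1 < T) by (split; nra).
  assert (- T < x2 - y2 < T) by (split; nra).
  apply cell_index_bounds in Q1, Q2, R1, R2; try exact HN.
  rewrite !minus_IZR.
  split; apply Rabs_def1; nra.
Qed.

Lemma singular_pairs_quadratic eps N : 0 < eps -> 0 < N ->
  exists A, forall r, 1 <= r ->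
    exists n, cardinal _ (singular_pairs eps N r) n /\ INR n <= A * r ^ 2.
Proof.
  intros Heps HN. destruct (Kab_le_far eps Heps) as [T [HT Hfar]].
  set (d := N * T + 1).
  exists ((2 * N + 5) ^ 2 * (2 * d + 3) ^ 2). intros r Hr.
  destruct (cardinal_offset_bounded (singular_pairs eps N r) (N * r + 1) d)
    as [n [Hn Hle]]; [nra | unfold d; nra | |].
  { intros z z' [Hz [Hz' Hs]]. simpl in *.
    pose proof (in_family_bound N r z HN Hz).
    pose proof (singular_offset_bound eps N T z z' HN HT Hfar Hs).
    tauto. }
  exists n. split; [exact Hn|].
  eapply Rle_trans; [exact Hle|].
  replace ((2 * N + 5) ^ 2 * (2 * d + 3) ^ 2 * r ^ 2)
    with (((2 * N + 5) * r) ^ 2 * (2 * d + 3) ^ 2) by ring.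
  apply Rmult_le_compat_r; [apply pow2_ge_0|].
  apply pow_incr. nra.
Qed.

Lemma le_mul_sq_ln_of_exp_le A e r : 0 < e -> 1 <= r -> exp (A / e) <= r ->
  A * r ^ 2 <= e * r ^ 2 * ln r.
Proof.
  intros He Hr Hexp.
  assert (Hln : A / e <= ln r).
  { rewrite <- (ln_exp (A / e)). apply ln_le; [apply exp_pos | exact Hexp]. }
  assert (A <= e * ln r).
  { replace A with (e * (A / e)) by (field; lra). apply Rmult_le_compat_l; lra. }
  pose proof (pow2_ge_0 r). nra.
Qed.

Theorem lemma3p3 (eps N : R) (r : R -> R) :
  0 < eps -> 0 < N ->
  (forall (z z' : Z * Z) (a b : mi), S1 a -> S1 b ->
     (exists x y, inQ N z x /\ inQ N z' y /\ Kab a b x y > eps) ->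
     forall u v, inQ N z u -> inQ N z' v -> Kab a b u v > eps / 2) ->
  (forall M, exists L, forall lam, L <= lam -> M <= r lam) ->
  forall e, 0 < e -> exists L, forall lam, L <= lam ->
    exists n : nat, cardinal _ (singular_pairs eps N (r lam)) n /\
      INR n <= e * (r lam) ^ 2 * ln (r lam).
Proof.
  intros Heps HN _ Hr e He.
  destruct (singular_pairs_quadratic eps N Heps HN) as [A HA].
  destruct (Hr (Rmax 1 (exp (A / e)))) as [L HL].
  exists L. intros lam Hlam.
  pose proof (HL lam Hlam) as Hmax.
  pose proof (Rmax_l 1 (exp (A / e))); pose proof (Rmax_r 1 (exp (A / e))).
  destruct (HA (r lam)) as [n [Hn Hle]]; [lra|].
  exists n. split; [exact Hn|].
  eapply Rle_trans; [exact Hle|].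
  apply le_mul_sq_ln_of_exp_le; lra.
Qed.
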